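(* Let $\mathcal{M}$ be the set of all marked overpartitions. There is a bijection $\Phi:\mathcal{M}\to\overline{SP}$ which preserves weight (if $(\pi,j)$ is a marked overpartition of $n$ then $|\Phi(\pi,j)|=n$) and satisfies, for every $(\pi,j)\in\mathcal M$ with $\vec\lambda=\Phi(\pi,j)$, \[ \bar k(\pi,j)=k(\vec\lambda)\qquad\text{and}\qquad\overline{\mathrm{sptcrank}}(\pi,j)=\overline{\mathrm{crank}}(\vec\lambda). \]
   Context: For a partition $\lambda$, $s(\lambda)$ is its smallest part ($s(\emptyset)=\infty$) and $|\lambda|$ its sum. Marked overpartitions: an overpartition of $n$ is a partition of $n$ in which the first occurrence of each part size may be overlined; a marked overpartition of $n$ is a pair $(\pi,j)$ where $\pi$ is an overpartition of $n$ whose smallest part is not overlined and $1\le j\le\nu(\pi)$, $\nu(\pi)$ the number of occurrences of the smallest part. Let $\pi_1$ be the partition of non-overlined parts and $\pi_2$ the partition (into distinct parts) of overlined parts. For a positive integer $m=b(m)2^{j(m)}$ with $b(m)$ odd and integers $m\ge n+1$, let $j_0(m,n)$ be the least nonnegative $j_0$ with $b(m)2^{j_0}\ge n+1$; $k(m,n)=0$ if $b(m)\ge2n$, $k(m,n)=2^{j(m)-j_0(m,n)}$ if $b(m)2^{j_0(m,n)}<2n$, $k(m,n)=0$ if $b(m)2^{j_0(m,n)}=2n$; and $k(\rho,n)=\sum_{m\in\rho}k(m,n)$ for $\rho$ into distinct parts $\ge n+1$. Set $\bar k(\pi,j)=\nu(\pi_1)-j+k(\pi_2,s(\pi_1))$,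 and $\overline{\mathrm{sptcrank}}(\pi,j)$ = (number of parts of $\pi_1$ that are $\ge s(\pi_1)+\bar k$) $-\bar k$ if $\bar k>0$, = (number of parts of $\pi_1$) $-1$ if $\bar k=0$. $\overline{SP}$ is the set of pairs $\vec\lambda=(\lambda_1,\lambda_2)$ of partitions with $0<s(\lambda_1)\le s(\lambda_2)$ such that every part of $\lambda_2$ that is $\ge2s(\lambda_1)+1$ is odd; $|\vec\lambda|=|\lambda_1|+|\lambda_2|$. $k(\vec\lambda)$ is the number of parts $j$ of $\lambda_2$ (with multiplicity) with $s(\lambda_1)\le j\le2s(\lambda_1)-1$; with $k=k(\vec\lambda)$, $\overline{\mathrm{crank}}(\vec\lambda)$ = (number of parts of $\lambda_1$ that are $\ge s(\lambda_1)+k$) $-k$ if $k>0$, = (number of parts of $\lambda_1$) $-1$ if $k=0$. *)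

From mathcomp Require Import all_boot all_algebra.
Set Implicit Arguments. Unset Strict Implicit. Unset Printing Implicit Defensive.

Definition is_part (l : seq nat) : bool := sorted geq l && all (fun x => 0 < x) l.
Definition is_dpart (l : seq nat) : bool :=
  sorted (fun a b => b < a) l && all (fun x => 0 < x) l.

(* smallest part of a nonempty list (only used on nonempty partitions;
   the convention s(empty)=infinity is handled explicitly in the predicates) *)
Definition spart (l : seq nat) : nat := foldr minn (head 0 l) l.

Definition nu (l : seq nat) : nat := count (pred1 (spart l)) l.

Definition jm (m : nat) : nat := logn 2 m.
Definition bm (m : nat) : nat := m %/ 2 ^ jm m.
(* least j0 >= 0 with b(m) 2^j0 >= n+1  (it is always <= n+1 since b(m) >= 1) *)
Definition j0 (m n : nat) : nat := find (fun i => n.+1 <= bm m * 2 ^ i) (iota 0 n.+2).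

Definition kmn (m n : nat) : nat :=
  if 2 * n <= bm m then 0
  else if bm m * 2 ^ j0 m n < 2 * n then 2 ^ (jm m - j0 m n)
  else 0.

Definition krho (rho : seq nat) (n : nat) : nat := sumn (map (fun m => kmn m n) rho).

(* Marked overpartition (pi, j), encoded as (pi1, pi2, j): pi1 the non-overlined
   parts, pi2 the overlined parts (distinct).  The smallest part of pi is not
   overlined, i.e. all overlined parts exceed s(pi1); pi1 nonempty since j >= 1. *)
Definition is_marked (x : seq nat * seq nat * nat) : bool :=
  let: (p1, p2, j) := x in
  [&& is_part p1, p1 != [::], is_dpart p2, all (fun m => spart p1 < m) p2,
      0 < j & j <= nu p1].

Definition weightM (x : seq nat * seq nat * nat) : nat :=
  let: (p1, p2, _) := x in sumn p1 + sumn p2.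

Definition kbar (x : seq nat * seq nat * nat) : nat :=
  let: (p1, p2, j) := x in nu p1 - j + krho p2 (spart p1).

Definition sptcrank (x : seq nat * seq nat * nat) : int :=
  let: (p1, _, _) := x in
  let k := kbar x in
  if 0 < k then ((count (fun p => (spart p1 + k <= p)%N) p1)%:Z - k%:Z)%R
  else ((size p1)%:Z - 1)%R.

Definition is_SPbar (y : seq nat * seq nat) : bool :=
  let: (l1, l2) := y in
  [&& is_part l1, l1 != [::], is_part l2, all (fun p => spart l1 <= p) l2
    & all (fun p : nat => ((2 * spart l1).+1 <= p) ==> odd p) l2].

Definition weightSP (y : seq nat * seq nat) : nat :=
  let: (l1, l2) := y in sumn l1 + sumn l2.

Definition kSP (y : seq nat * seq nat) : nat :=
  let: (l1, l2) := y in
  count (fun p : nat => (spart l1 <= p) && (p <= (2 * spart l1).-1)) l2.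

Definition crankSP (y : seq nat * seq nat) : int :=
  let: (l1, _) := y in
  let k := kSP y in
  if 0 < k then ((count (fun p => (spart l1 + k <= p)%N) l1)%:Z - k%:Z)%R
  else ((size l1)%:Z - 1)%R.

Definition Mset := {x : seq nat * seq nat * nat | is_marked x}.
Definition SPset := {y : seq nat * seq nat | is_SPbar y}.

From mathcomp Require Import all_boot all_algebra.
From mathcomp Require Import zify.

(* Let s be the smallest non-overlined part.  Phi keeps the parts of pi1
   above s in lambda1 together with j copies of s, moves the other nu - j
   copies of s to lambda2, and splits every overlined part m into 2^e copies
   of c, where m = c 2^e with c "admissible": s < c, and c odd once c > 2s.
   This factorization is unique, so the inverse merges, for every admissible
   c of multiplicity n in lambda2, the copies of c back into the distinct
   parts c 2^i, i running over the binary digits of n (Glaisher).  The parts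
   of lambda2 in [s, 2s - 1] are the nu - j copies of s and the copies of the
   cores below 2s, and k(m, s) counts exactly the latter, so kbar = k; since
   lambda1 only differs from pi1 by copies of s, the cranks agree as well. *)

Set Implicit Arguments.
Unset Strict Implicit.
Unset Printing Implicit Defensive.

Lemma geq_total : total (geq : rel nat).
Proof. by move=> x y; apply: leq_total. Qed.

Lemma geq_trans : transitive (geq : rel nat).
Proof. by move=> x y z /= yx zy; apply: leq_trans zy yx. Qed.

Lemma geq_anti : antisymmetric (geq : rel nat).
Proof. by move=> x y /= /andP[yx xy]; apply/eqP; rewrite eqn_leq xy yx. Qed.

Lemma sorted_sort_geq (s : seq nat) : sorted geq (sort geq s).
Proof. exact: (@sort_sorted _ geq geq_total). Qed.

Lemma sort_geq_perm (s t : seq nat) : sorted geq t -> perm_eq s t -> sort geq s = t.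
Proof.
move=> t_sorted st; apply: (sorted_eq geq_trans geq_anti) => //.
  exact: sorted_sort_geq.
by rewrite perm_sort.
Qed.

Lemma perm_count_mem (T : eqType) (s t : seq T) :
  (forall x, count_mem x s = count_mem x t) -> perm_eq s t.
Proof. by move=> eq_st; apply/allP => x _; apply/eqP. Qed.

Lemma spart_le (l : seq nat) x : x \in l -> spart l <= x.
Proof.
rewrite /spart; elim: l (head 0 l) => //= y l IHl a; rewrite inE.
by case/predU1P => [->|/IHl xl]; rewrite geq_min ?leqnn ?xl ?orbT.
Qed.

Lemma foldr_minn_mem a (l : seq nat) : foldr minn a l \in a :: l.
Proof.
elim: l => [|y l IHl] /=; first exact: mem_head.
rewrite /minn; case: ifP => _; first by rewrite !inE eqxx orbT.
by move: IHl; rewrite !inE => /orP[] ->; rewrite ?orbT.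
Qed.

Lemma spart_in (l : seq nat) : l != [::] -> spart l \in l.
Proof.
case: l => // y l _; have := foldr_minn_mem y (y :: l).
by rewrite /spart /= inE => /predU1P[->|]; rewrite ?mem_head.
Qed.

Lemma spart_eq (l : seq nat) a : a \in l -> all (leq a) l -> spart l = a.
Proof.
move=> al /allP la; apply/eqP; rewrite eqn_leq spart_le //.
by apply/la/spart_in; apply: contraTneq al => ->.
Qed.

Section SplitAtMin.
Variables (s : nat) (l : seq nat).
Hypothesis l_ge : all (leq s) l.

Lemma count_split_min (a : pred nat) :
  count a l = count a [seq x <- l | s < x] + a s * count_mem s l.
Proof.
elim: l l_ge => [|x l' IHl] /=; first by rewrite muln0.
case/andP=> sx /IHl ->; case: ltngtP sx => // [sx|<-] _ /=; first by rewrite addnA.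
by case: (a s) => /=; lia.
Qed.

Lemma perm_split_min : perm_eq l ([seq x <- l | s < x] ++ nseq (count_mem s l) s).
Proof. by apply/permP => a; rewrite count_cat count_nseq count_split_min mulnC. Qed.

End SplitAtMin.

Lemma is_part_sort (l : seq nat) : is_part (sort geq l) = all (ltn 0) l.
Proof. by rewrite /is_part sorted_sort_geq all_sort. Qed.

Lemma sumn_sort (l : seq nat) : sumn (sort geq l) = sumn l.
Proof. by apply/perm_sumn; rewrite perm_sort. Qed.

Lemma is_dpart_sort (l : seq nat) : is_dpart (sort geq l) = uniq l && all (ltn 0) l.
Proof.
rewrite /is_dpart -[sorted _ _]/(sorted gtn (sort geq l)) gtn_sorted_uniq_geq.
by rewrite sort_uniq sorted_sort_geq all_sort andbT.
Qed.

Definition bits (n : nat) : seq nat := [seq i <- iota 0 n.+1 | odd (n %/ 2 ^ i)].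

Lemma bits_uniq n : uniq (bits n).
Proof. by rewrite filter_uniq ?iota_uniq. Qed.

Lemma mem_bits n i : (i \in bits n) = (i <= n) && odd (n %/ 2 ^ i).
Proof. by rewrite mem_filter mem_iota andbC. Qed.

Definition decr_exps (E : seq nat) := [seq e.-1 | e <- E & 0 < e].

Lemma decr_exps_uniq E : uniq E -> uniq (decr_exps E).
Proof.
move=> E_uniq; rewrite map_inj_in_uniq ?filter_uniq // => x y.
by rewrite !mem_filter => /andP[x_gt0 _] /andP[y_gt0 _]; lia.
Qed.

Lemma mem_decr_exps E i : (i \in decr_exps E) = (i.+1 \in E).
Proof.
apply/mapP/idP => [[x] | iE]; last by exists i.+1; rewrite // mem_filter iE.
by rewrite mem_filter => /andP[x_gt0 xE] ->; rewrite prednK.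
Qed.

Lemma sum_pow2_halve E : uniq E ->
  \sum_(e <- E) 2 ^ e = (0 \in E) + 2 * \sum_(e <- decr_exps E) 2 ^ e.
Proof.
elim: E => [|[|e] E IHE]; rewrite ?big_nil // cons_uniq => /andP[eE /IHE {}IHE].
  by rewrite big_cons IHE /decr_exps /= (negbTE eE) expn0.
by rewrite big_cons IHE inE /decr_exps /= big_cons expnS; lia.
Qed.

Lemma odd_sum_pow2_div E i : uniq E ->
  odd ((\sum_(e <- E) 2 ^ e) %/ 2 ^ i) = (i \in E).
Proof.
elim: i E => [|i IHi] E E_uniq; rewrite sum_pow2_halve //.
  by rewrite expn0 divn1 oddD oddM /= addbF; case: (0 \in E).
have bit0_lt2 : (0 \in E) < 2 by case: (0 \in E).
rewrite expnS divnMA addnC mulnC divnMDl // (divn_small bit0_lt2) addn0.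
by rewrite IHi ?decr_exps_uniq // mem_decr_exps.
Qed.

Lemma eq_from_bits a b :
  (forall i, odd (a %/ 2 ^ i) = odd (b %/ 2 ^ i)) -> a = b.
Proof.
move eq_n: (a + b) => n; elim/ltn_ind: n a b eq_n => n IHn a b ab_n eq_ab.
have odd_ab := eq_ab 0; rewrite expn0 !divn1 in odd_ab.
rewrite (divn_eq a 2) (divn_eq b 2) !modn2 odd_ab; congr (_ * 2 + _).
have [ab0|ab_gt0] := posnP (a + b).
  by have [-> ->] : a = 0 /\ b = 0 by lia.
apply: (IHn (a %/ 2 + b %/ 2)) => // [|i]; first lia.
by rewrite -!divnMA -expnS eq_ab.
Qed.

Lemma sum_pow2_bits n : \sum_(i <- bits n) 2 ^ i = n.
Proof.
apply: eq_from_bits => i; rewrite odd_sum_pow2_div ?bits_uniq // mem_bits.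
case: leqP => // n_lt_i; rewrite divn_small //.
exact: leq_trans n_lt_i (ltnW (ltn_expl _ (ltnSn 1))).
Qed.

Lemma bits_sum_pow2 E i : uniq E -> (i \in bits (\sum_(e <- E) 2 ^ e)) = (i \in E).
Proof.
move=> E_uniq; rewrite mem_bits odd_sum_pow2_div // andbC.
case iE: (i \in E) => //=; rewrite (bigD1_seq i) //=.
by have := ltn_expl i (ltnSn 1); lia.
Qed.

Lemma odd_part_spec m : 0 < m -> m = bm m * 2 ^ jm m /\ odd (bm m).
Proof.
move=> m_gt0; have [b b_odd m_eq] := pfactor_coprime (isT : prime 2) m_gt0.
have -> : bm m = b by rewrite /bm /jm {1}m_eq mulnK // expn_gt0.
by rewrite /jm -m_eq -coprime2n.
Qed.

Lemma find_iota_spec (P : pred nat) n a : a < n -> P a ->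
  P (find P (iota 0 n)) /\ forall i, i < find P (iota 0 n) -> ~~ P i.
Proof.
move=> a_lt_n Pa; have has_P : has P (iota 0 n).
  by apply/hasP; exists a; rewrite ?mem_iota.
have := has_P; rewrite has_find size_iota => f_lt_n.
split; first by have := nth_find 0 has_P; rewrite nth_iota.
move=> i lt_if; have := before_find 0 lt_if.
by rewrite nth_iota ?(ltn_trans lt_if) // => ->.
Qed.

(* For [s < m], [m = core s m * 2 ^ core_exp s m] is the unique way of writing
   [m] as an admissible part times a power of two; [core s m = b(m) 2^j0(m, s)]
   is the least [b(m) 2^j] exceeding [s]. *)
Definition admissible (s c : nat) : bool := (s < c) && ((2 * s < c) ==> odd c).
Definition core (s m : nat) : nat := bm m * 2 ^ j0 m s.
Definition core_exp (s m : nat) : nat := jm m - j0 m s.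

Section Cores.
Variable s : nat.

Lemma j0_spec m : s < m ->
  [/\ s < core s m, j0 m s <= jm m & forall i, i < j0 m s -> bm m * 2 ^ i <= s].
Proof.
move=> s_lt_m; have [m_eq b_odd] := odd_part_spec (leq_ltn_trans (leq0n s) s_lt_m).
have b_gt0 : 0 < bm m by case: (bm m) b_odd.
have [] := find_iota_spec (P := fun i => s < bm m * 2 ^ i) (ltnSn s.+1).
  exact: leq_trans (ltnW (ltn_expl _ (ltnSn 1))) (leq_pmull _ b_gt0).
rewrite -/(j0 m s) => s_lt_core min_j0; split => [//||i /min_j0]; last by rewrite -leqNgt.
by rewrite leqNgt; apply/negP => /min_j0; rewrite -m_eq s_lt_m.
Qed.

Lemma core_spec m : s < m -> m = core s m * 2 ^ core_exp s m /\ admissible s (core s m).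
Proof.
move=> s_lt_m; have [s_lt_core j0_le min_j0] := j0_spec s_lt_m.
have [m_eq b_odd] := odd_part_spec (leq_ltn_trans (leq0n s) s_lt_m).
split; first by rewrite /core /core_exp -mulnA -expnD subnKC.
rewrite /admissible s_lt_core /core; case: (j0 m s) min_j0 => [|k] min_j0 /=.
  by rewrite expn0 muln1 b_odd implybT.
by have := min_j0 k (ltnSn k); rewrite expnS mulnCA; lia.
Qed.

Lemma admissible_mul_pow2_inj c c' e e' : admissible s c -> admissible s c' ->
  c * 2 ^ e = c' * 2 ^ e' -> c = c' /\ e = e'.
Proof.
wlog le_ee' : c c' e e' / e <= e'.
  move=> wlog ac ac' eq_m; have [le|/ltnW le] := leqP e e'; first exact: wlog.
  by have [-> ->] := wlog c' c e' e le ac' ac (esym eq_m).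
move=> /andP[_ odd_c] /andP[s_lt_c' _] eq_m.
have c_eq : c = c' * 2 ^ (e' - e).
  by apply/eqP; rewrite -(eqn_pmul2r (expn_gt0 2 e)) -mulnA -expnD subnK // eq_m.
have [d0|d_gt0] := posnP (e' - e).
  rewrite c_eq d0 expn0 muln1; split=> //.
  by apply/eqP; rewrite eqn_leq le_ee' -subn_eq0 d0.
have c_even : ~~ odd c by rewrite c_eq oddM oddX -(prednK d_gt0) andbF.
have : 2 * s < c.
  rewrite c_eq -(prednK d_gt0) expnS mulnCA ltn_pmul2l //.
  by rewrite (leq_trans s_lt_c') // leq_pmulr ?expn_gt0.
by move/(implyP odd_c); rewrite (negbTE c_even).
Qed.

Lemma core_mul_pow2 c i : admissible s c ->
  core s (c * 2 ^ i) = c /\ core_exp s (c * 2 ^ i) = i.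
Proof.
move=> ac; have s_lt : s < c * 2 ^ i.
  by case/andP: ac => s_lt_c _; rewrite (leq_trans s_lt_c) // leq_pmulr ?expn_gt0.
have [m_eq a_core] := core_spec s_lt.
by have [] := admissible_mul_pow2_inj a_core ac (esym m_eq).
Qed.

Lemma eq_core_mul_pow2 c i m : admissible s c -> s < m ->
  (c * 2 ^ i == m) = (c == core s m) && (i == core_exp s m).
Proof.
move=> ac s_lt_m; apply/eqP/andP => [<- | [/eqP-> /eqP->]].
  by have [-> ->] := core_mul_pow2 i ac.
by have [<- _] := core_spec s_lt_m.
Qed.

Lemma kmnE m : 0 < s -> s < m ->
  kmn m s = (s <= core s m <= (2 * s).-1) * 2 ^ core_exp s m.
Proof.
move=> s_gt0 s_lt_m; have [s_lt_core _ _] := j0_spec s_lt_m.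
have b_le_core : bm m <= core s m by rewrite leq_pmulr ?expn_gt0.
rewrite /kmn /core /core_exp in s_lt_core b_le_core *.
set c := bm m * 2 ^ j0 m s in s_lt_core b_le_core *.
case: (leqP (2 * s) (bm m)) => [big|_]; last case: (ltnP c (2 * s)) => [small|large].
- by have -> : (s <= c <= (2 * s).-1) = false by lia.
- have -> : (s <= c <= (2 * s).-1) by apply/andP; split; lia.
  by rewrite mul1n.
- by have -> : (s <= c <= (2 * s).-1) = false by lia.
Qed.

End Cores.

Lemma sum_pred1_mul (T : eqType) (r : seq T) c (F : T -> nat) :
  \sum_(x <- r) (x == c) * F x = count_mem c r * F c.
Proof.
elim: r => [|x r IHr]; first by rewrite big_nil.
by rewrite big_cons IHr /=; case: eqP => [->|_]; rewrite ?mulnDl.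
Qed.

Definition split_parts (s : nat) (p : seq nat) : seq nat :=
  flatten [seq nseq (2 ^ core_exp s m) (core s m) | m <- p].

Definition merge_parts (l : seq nat) : seq nat :=
  flatten [seq [seq c * 2 ^ i | i <- bits (count_mem c l)] | c <- undup l].

Definition exps_of_core (s : nat) (p : seq nat) (c : nat) : seq nat :=
  [seq core_exp s m | m <- p & core s m == c].

Section SplitMerge.
Variable s : nat.

Lemma count_split_parts (a : pred nat) p :
  count a (split_parts s p) = \sum_(m <- p) a (core s m) * 2 ^ core_exp s m.
Proof.
elim: p => [|m p IHp]; first by rewrite big_nil.
by rewrite /split_parts /= count_cat -/(split_parts s p) IHp big_cons count_nseq.
Qed.

Lemma count_mem_split_parts p c :
  count_mem c (split_parts s p) = \sum_(e <- exps_of_core s p c) 2 ^ e.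
Proof.
rewrite count_split_parts big_map big_filter [RHS]big_mkcond.
by apply: eq_bigr => m _ /=; case: eqP; rewrite ?mul1n.
Qed.

Lemma perm_split_parts p p' :
  perm_eq p p' -> perm_eq (split_parts s p) (split_parts s p').
Proof. by move=> pp'; apply/perm_flatten/perm_map. Qed.

Lemma sumn_split_parts p : all (ltn s) p -> sumn (split_parts s p) = sumn p.
Proof.
elim: p => [|m p IHp] //= /andP[s_lt_m /IHp IH].
by rewrite sumn_cat -/(split_parts s p) IH sumn_nseq -(core_spec s_lt_m).1.
Qed.

Lemma split_parts_admissible p : all (ltn s) p -> all (admissible s) (split_parts s p).
Proof.
move=> /allP p_gt; apply/allP => x /flattenP[_ /mapP[m mp ->]] /nseqP[-> _].
exact: (core_spec (p_gt m mp)).2.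
Qed.

Lemma mem_exps_of_core p x : all (ltn s) p -> s < x ->
  (core_exp s x \in exps_of_core s p (core s x)) = (x \in p).
Proof.
move=> /allP p_gt s_lt_x; apply/mapP/idP => [[m] | xp]; last first.
  by exists x; rewrite // mem_filter eqxx.
rewrite mem_filter => /andP[/eqP core_m mp] exp_m.
have [x_eq _] := core_spec s_lt_x; have [m_eq _] := core_spec (p_gt m mp).
by rewrite x_eq -core_m exp_m -m_eq.
Qed.

Lemma exps_of_core_uniq p c : all (ltn s) p -> uniq p -> uniq (exps_of_core s p c).
Proof.
move=> /allP p_gt p_uniq; rewrite map_inj_in_uniq ?filter_uniq // => m m'.
rewrite !mem_filter => /andP[/eqP core_m mp] /andP[/eqP core_m' m'p] exp_eq.
have [m_eq _] := core_spec (p_gt m mp); have [m'_eq _] := core_spec (p_gt m' m'p).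
by rewrite m_eq m'_eq core_m core_m' exp_eq.
Qed.

Lemma count_mem_merge_parts l m : all (admissible s) l ->
  count_mem m (merge_parts l) =
    (s < m) && (core_exp s m \in bits (count_mem (core s m) l)).
Proof.
move=> /allP l_adm; rewrite /merge_parts count_flatten sumnE !big_map.
have [s_lt_m|m_le_s] := ltnP s m; last first.
  rewrite big1_seq // => c /andP[_]; rewrite mem_undup => /l_adm /andP[s_lt_c _].
  apply/count_memPn/mapP => -[i _ m_eq]; move: m_le_s.
  by rewrite m_eq leqNgt (leq_trans s_lt_c) // leq_pmulr ?expn_gt0.
rewrite (eq_big_seq (fun c => (c == core s m) *
    (core_exp s m \in bits (count_mem c l)))) => [|c]; last first.
  rewrite mem_undup => /l_adm c_adm; rewrite count_map.
  under eq_count => i do rewrite /= (eq_core_mul_pow2 _ c_adm s_lt_m).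
  case: eqP => _ /=; last by rewrite count_pred0.
  by rewrite count_uniq_mem ?bits_uniq ?mul1n.
rewrite sum_pred1_mul count_uniq_mem ?undup_uniq // mem_undup /=.
by case: (boolP (core s m \in l)) => [_|/count_memPn->]; rewrite ?mul1n ?mul0n.
Qed.

Lemma mem_merge_parts l m : all (admissible s) l ->
  (m \in merge_parts l) = (s < m) && (core_exp s m \in bits (count_mem (core s m) l)).
Proof.
by move=> l_adm; rewrite -has_pred1 has_count count_mem_merge_parts //; case: (_ && _).
Qed.

Lemma merge_parts_uniq l : all (admissible s) l -> uniq (merge_parts l).
Proof.
move=> l_adm; apply: count_mem_uniq => m.
by rewrite count_mem_merge_parts ?mem_merge_parts.
Qed.

Lemma perm_merge_parts l l' : all (admissible s) l -> perm_eq l l' ->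
  perm_eq (merge_parts l) (merge_parts l').
Proof.
move=> l_adm ll'; have l'_adm : all (admissible s) l' by rewrite -(perm_all _ ll').
apply: uniq_perm; rewrite ?merge_parts_uniq // => m.
by rewrite !mem_merge_parts // (permP ll').
Qed.

Lemma split_merge_parts l : all (admissible s) l ->
  perm_eq (split_parts s (merge_parts l)) l.
Proof.
move=> /allP l_adm; apply: perm_count_mem => c.
rewrite count_split_parts /merge_parts big_flatten big_map.
rewrite (eq_big_seq (fun c' => (c' == c) * count_mem c' l)) => [|c']; last first.
  rewrite mem_undup => /l_adm c'_adm; rewrite big_map.
  rewrite (eq_bigr (fun i => (c' == c) * 2 ^ i)) => [|i _]; last first.
    by have [-> ->] := core_mul_pow2 i c'_adm.
  by rewrite -big_distrr sum_pow2_bits.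
rewrite sum_pred1_mul count_uniq_mem ?undup_uniq // mem_undup.
by case: (boolP (c \in l)) => [_|/count_memPn->]; rewrite ?mul1n.
Qed.

Lemma merge_split_parts p : all (ltn s) p -> uniq p ->
  perm_eq (merge_parts (split_parts s p)) p.
Proof.
move=> p_gt p_uniq; have split_adm := split_parts_admissible p_gt.
apply: uniq_perm => //; first exact: merge_parts_uniq.
move=> x; rewrite mem_merge_parts // count_mem_split_parts.
have [s_lt_x|x_le_s] := ltnP s x.
  by rewrite bits_sum_pow2 ?exps_of_core_uniq ?mem_exps_of_core.
by apply/esym/negP => /(allP p_gt) /=; rewrite ltnNge x_le_s.
Qed.

End SplitMerge.

Definition phi_raw (x : seq nat * seq nat * nat) : seq nat * seq nat :=
  let: (p1, p2, j) := x in
  let s := spart p1 in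
  (sort geq ([seq y <- p1 | s < y] ++ nseq j s),
   sort geq (nseq (nu p1 - j) s ++ split_parts s p2)).

Definition psi_raw (y : seq nat * seq nat) : seq nat * seq nat * nat :=
  let: (l1, l2) := y in
  let s := spart l1 in
  (sort geq (l1 ++ nseq (count_mem s l2) s),
   sort geq (merge_parts [seq y <- l2 | s < y]),
   count_mem s l1).

Section PhiRaw.
Variables (p1 p2 : seq nat) (j : nat).
Hypothesis marked : is_marked (p1, p2, j).

Local Notation s := (spart p1).
Local Notation lam1 := ([seq y <- p1 | s < y] ++ nseq j s).
Local Notation lam2 := (nseq (nu p1 - j) s ++ split_parts s p2).

Let s_in_p1 : s \in p1.
Proof. by case/and5P: marked => _ /spart_in. Qed.

Let p1_ge : all (leq s) p1.
Proof. by apply/allP => x /spart_le. Qed.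

Let s_gt0 : 0 < s.
Proof. by case/and5P: marked => /andP[_ /allP/(_ s s_in_p1)]. Qed.

Let p2_gt : all (ltn s) p2.
Proof. by case/and5P: marked. Qed.

Let j_gt0 : 0 < j.
Proof. by case/and5P: marked => _ _ _ _ /andP[]. Qed.

Let j_le_nu : j <= nu p1.
Proof. by case/and5P: marked => _ _ _ _ /andP[]. Qed.

Let p1_sorted : sorted geq p1.
Proof. by case/and5P: marked => /andP[]. Qed.

Let p2_uniq_sorted : uniq p2 && sorted geq p2.
Proof. by case/and5P: marked => _ _ /andP[]; rewrite -gtn_sorted_uniq_geq. Qed.

Let s_in_lam1 : s \in lam1.
Proof. by rewrite mem_cat mem_nseq j_gt0 eqxx orbT. Qed.

Let lam1_ge : all (leq s) lam1.
Proof.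
rewrite all_cat all_nseq leqnn orbT andbT.
by apply/allP => x; rewrite mem_filter => /andP[/ltnW].
Qed.

Let lam2_ok : all (fun x => (s <= x) && ((2 * s < x) ==> odd x)) lam2.
Proof.
rewrite all_cat all_nseq leqnn /= implybE -leqNgt leq_pmull ?orbT //=.
apply/allP => x /(allP (split_parts_admissible p2_gt)) /andP[s_lt_x odd_x].
by rewrite ltnW.
Qed.

Lemma spart_phi1 : spart (sort geq lam1) = s.
Proof. by apply: spart_eq; rewrite ?mem_sort ?all_sort. Qed.

Lemma phi_raw_SPbar : is_SPbar (phi_raw (p1, p2, j)).
Proof.
have lam2_ge : all (leq s) lam2 by apply: sub_all lam2_ok => x /andP[].
rewrite /is_SPbar /= spart_phi1 !is_part_sort !all_sort lam2_ge.
apply/and5P; split=> //.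
- by apply/allP => x /(allP lam1_ge); apply: leq_trans.
- by move: s_in_lam1; rewrite -(mem_sort geq); case: (sort _ _).
- by apply/allP => x /(allP lam2_ge); apply: leq_trans.
- by apply: sub_all lam2_ok => x /andP[].
Qed.

Lemma psi_phi_raw : psi_raw (phi_raw (p1, p2, j)) = (p1, p2, j).
Proof.
rewrite /psi_raw /= spart_phi1.
have count_s_filter : count_mem s [seq y <- p1 | s < y] = 0.
  by apply/count_memPn; rewrite mem_filter ltnn.
have split_adm := split_parts_admissible p2_gt.
have split_gt : all (ltn s) (split_parts s p2) by apply: sub_all split_adm => x /andP[].
have count_s_split : count_mem s (split_parts s p2) = 0.
  by apply/count_memPn/negP => /(allP split_gt); rewrite /= ltnn.
rewrite !count_sort !count_cat !count_nseq /= eqxx !mul1n count_s_filter count_s_split.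
have [p2_uniq p2_sorted] := andP p2_uniq_sorted.
congr (_, _, _).
  apply: (sort_geq_perm p1_sorted); rewrite perm_sym (permPl (perm_split_min p1_ge)).
  have -> : count_mem s p1 = j + (nu p1 - j) by rewrite subnKC.
  by rewrite addn0 nseqD catA perm_cat2r perm_sym perm_sort.
have L_perm : perm_eq (split_parts s p2) [seq y <- sort geq lam2 | s < y].
  rewrite (filter_sort geq_total geq_trans) perm_sym perm_sort.
  rewrite filter_cat filter_nseq ltnn /=.
  by move/all_filterP: split_gt => ->.
apply: (sort_geq_perm p2_sorted); apply: perm_trans (merge_split_parts p2_gt p2_uniq).
rewrite perm_sym; exact: perm_merge_parts split_adm L_perm.
Qed.

Lemma weight_phi_raw : weightSP (phi_raw (p1, p2, j)) = weightM (p1, p2, j).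
Proof.
rewrite /= !sumn_sort !sumn_cat !sumn_nseq sumn_split_parts //.
rewrite (perm_sumn (perm_split_min p1_ge)) sumn_cat sumn_nseq -[count_mem s p1]/(nu p1).
by rewrite -{2}(subnKC j_le_nu) mulnDr; lia.
Qed.

Lemma kSP_phi_raw : kbar (p1, p2, j) = kSP (phi_raw (p1, p2, j)).
Proof.
rewrite /kSP /= spart_phi1 count_sort count_cat count_nseq count_split_parts /=.
have -> : (s <= s <= (2 * s).-1) by apply/andP; split; lia.
rewrite mul1n /krho sumnE big_map; congr (_ + _).
by apply: eq_big_seq => m /(allP p2_gt) s_lt_m; apply: kmnE.
Qed.

Lemma sptcrank_phi_raw : sptcrank (p1, p2, j) = crankSP (phi_raw (p1, p2, j)).
Proof.
rewrite /crankSP -kSP_phi_raw /sptcrank; set k := kbar _; rewrite /= spart_phi1.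
case: (posnP k) => [k0|k_gt0].
  have nu_eq_j : nu p1 = j by move: k0; rewrite /k /kbar; lia.
  rewrite size_sort size_cat size_nseq -nu_eq_j -(count_predT p1) -count_predT.
  by rewrite (count_split_min p1_ge) mul1n.
rewrite count_sort count_cat count_nseq (count_split_min p1_ge) /=.
by rewrite (_ : s + k <= s = false) ?mul0n //; lia.
Qed.

End PhiRaw.

Section PsiRaw.
Variables l1 l2 : seq nat.
Hypothesis spbar : is_SPbar (l1, l2).

Local Notation s := (spart l1).
Local Notation L := [seq y <- l2 | s < y].

Let s_in_l1 : s \in l1.
Proof. by case/and5P: spbar => _ /spart_in. Qed.

Let l1_ge : all (leq s) l1.
Proof. by apply/allP => x /spart_le. Qed.

Let s_gt0 : 0 < s.
Proof. by case/and5P: spbar => /andP[_ /allP/(_ s s_in_l1)]. Qed.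

Let l2_ge : all (leq s) l2.
Proof. by case/and5P: spbar. Qed.

Let l1_sorted : sorted geq l1.
Proof. by case/and5P: spbar => /andP[]. Qed.

Let l2_sorted : sorted geq l2.
Proof. by case/and5P: spbar => _ _ /andP[]. Qed.

Let L_adm : all (admissible s) L.
Proof.
case/and5P: spbar => _ _ _ _ /allP l2_odd; apply/allP => x.
by rewrite mem_filter => /andP[s_lt_x /l2_odd]; rewrite /admissible s_lt_x.
Qed.

Let psi1_ge : all (leq s) (l1 ++ nseq (count_mem s l2) s).
Proof. by rewrite all_cat l1_ge all_nseq leqnn orbT. Qed.

Lemma spart_psi1 : spart (sort geq (l1 ++ nseq (count_mem s l2) s)) = s.
Proof. by apply: spart_eq; rewrite ?mem_sort ?all_sort ?mem_cat ?s_in_l1. Qed.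

Lemma psi_raw_marked : is_marked (psi_raw (l1, l2)).
Proof.
rewrite /is_marked /= spart_psi1 is_part_sort is_dpart_sort all_sort.
rewrite (merge_parts_uniq L_adm) /= /nu spart_psi1 count_sort count_cat leq_addr andbT.
have merge_gt : all (ltn s) (merge_parts L).
  by apply/allP => x; rewrite (mem_merge_parts _ L_adm) => /andP[].
apply/and5P; split.
- by apply/allP => x /(allP psi1_ge); apply: leq_trans.
- have : s \in sort geq (l1 ++ nseq (count_mem s l2) s).
    by rewrite mem_sort mem_cat s_in_l1.
  by case: (sort _ _).
- by apply: sub_all merge_gt => x; apply: leq_ltn_trans.
- exact: merge_gt.
- by move: s_in_l1; rewrite -has_pred1 has_count.
Qed.

Lemma phi_psi_raw : phi_raw (psi_raw (l1, l2)) = (l1, l2).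
Proof.
rewrite /phi_raw /= spart_psi1 /nu spart_psi1 count_sort count_cat count_nseq /=.
rewrite eqxx mul1n addKn; congr (_, _).
  apply: (sort_geq_perm l1_sorted).
  rewrite (filter_sort geq_total geq_trans) filter_cat filter_nseq ltnn cats0.
  by rewrite perm_sym (permPl (perm_split_min l1_ge)) perm_cat2r perm_sym perm_sort.
have split_merge : perm_eq (split_parts s (sort geq (merge_parts L))) L.
  apply: perm_trans (split_merge_parts L_adm).
  by apply: perm_split_parts; rewrite perm_sort.
apply: (sort_geq_perm l2_sorted).
by rewrite perm_sym (permPl (perm_split_min l2_ge)) perm_catC perm_cat2l perm_sym.
Qed.

End PsiRaw.

Definition Phi (x : Mset) : SPset :=
  let: exist (p1, p2, j) marked := x in
  exist _ (phi_raw (p1, p2, j)) (phi_raw_SPbar marked).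

Definition Psi (y : SPset) : Mset :=
  let: exist (l1, l2) spbar := y in
  exist _ (psi_raw (l1, l2)) (psi_raw_marked spbar).

Theorem mainTheorem16 :
  exists Phi : Mset -> SPset,
    bijective Phi /\
    forall x : Mset,
      weightSP (val (Phi x)) = weightM (val x) /\
      kbar (val x) = kSP (val (Phi x)) /\
      sptcrank (val x) = crankSP (val (Phi x)).
Proof.
exists Phi; split.
  by exists Psi => [[[[p1 p2] j] marked] | [[l1 l2] spbar]]; apply: val_inj;
    [exact: psi_phi_raw | exact: phi_psi_raw].
move=> [[[p1 p2] j] marked]; split; first exact: weight_phi_raw.
by split; [exact: kSP_phi_raw | exact: sptcrank_phi_raw].
Qed.
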